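(* Let $\Omega>0$, let $0<\sigma\leq m_{\min}$, let $n\geq 2$ be an integer and set \[ \tau=\frac{e^{-1}}{\Omega}\Big(\frac{\sigma}{m_{\min}}\Big)^{\frac{1}{2n-1}}. \] Then there exist a positive discrete measure $\mu=\sum_{j=1}^{n}a_j \delta_{y_j}$ (all $a_j>0$) whose $n$ supports are the points $-(n-\tfrac12)\tau+2k\tau$, $k=0,1,\dots,n-1$ (i.e. $-(n-\frac{1}{2})\tau, -(n-\frac{5}{2})\tau, \dots, (n-\frac{3}{2})\tau$), and a positive discrete measure $\hat \mu=\sum_{j=1}^{n}\hat a_j \delta_{\hat y_j}$ (all $\hat a_j>0$) whose $n$ supports are the points $-(n-\tfrac32)\tau+2k\tau$, $k=0,1,\dots,n-1$ (i.e. $-(n-\frac{3}{2})\tau, -(n-\frac{7}{2})\tau,\dots, (n-\frac{1}{2})\tau$), such that \[ \max_{\omega\in[-\Omega,\Omega]}\big|\mathcal F[\hat \mu](\omega)- \mathcal F[\mu](\omega)\big|< \sigma, \qquad \min_{1\leq j\leq n}|a_j|= m_{\min}. \]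
   Context: For a discrete measure $\nu=\sum_{j} c_j\delta_{x_j}$ on $\mathbb R$, its Fourier transform is $\mathcal F[\nu](\omega)=\sum_j c_j e^{i x_j\omega}$, $\omega\in\mathbb R$. Here $\Omega>0$ is the cutoff frequency, $\sigma>0$ the noise level and $m_{\min}>0$ a prescribed minimal amplitude. *)

From Stdlib Require Import Reals.
From Coquelicot Require Import Coquelicot.
Open Scope R_scope.

Definition cexpi (t : R) : C := (cos t, sin t).

Fixpoint csum (f : nat -> C) (n : nat) : C :=
  match n with
  | O => 0%C
  | S k => (csum f k + f k)%C
  end.

(* Fourier transform of the discrete measure  sum_{j<n} c_j delta_{x_j}:
   F[nu](w) = sum_{j<n} c_j e^{i x_j w} *)
Definition fourier_discrete (n : nat) (c x : nat -> R) (w : R) : C :=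
  csum (fun j => (RtoC (c j) * cexpi (x j * w))%C) n.

From Stdlib Require Import Reals Lra Lia.
From Coquelicot Require Import Coquelicot.
Open Scope R_scope.

(* Put the weights m_min * binom (2n-1) k on the interleaved nodes x0 + k tau,
   k = 0 .. 2n-1, even k for mu and odd k for mu-hat.  By the binomial theorem
   F[mu-hat](w) - F[mu](w) = - m_min e^{i x0 w} (1 - e^{i tau w})^(2n-1), and
   since |1 - e^{it}| <= |t| its modulus is at most
   m_min (tau Omega)^(2n-1) = e^{-(2n-1)} sigma < sigma.  The smallest weight is
   m_min * binom (2n-1) 0 = m_min. *)

Lemma csum_ext (f g : nat -> C) (L : nat) :
  (forall k, (k < L)%nat -> f k = g k) -> csum f L = csum g L.
Proof.
  induction L as [|L IH]; intros Hfg; simpl; auto.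
  rewrite IH by (intros; apply Hfg; lia).
  rewrite Hfg by lia. reflexivity.
Qed.

Lemma csum_add (f g : nat -> C) (L : nat) :
  csum (fun k => f k + g k)%C L = (csum f L + csum g L)%C.
Proof. induction L as [|L IH]; simpl; [ring | rewrite IH; ring]. Qed.

Lemma csum_mul_l (c : C) (f : nat -> C) (L : nat) :
  csum (fun k => c * f k)%C L = (c * csum f L)%C.
Proof. induction L as [|L IH]; simpl; [ring | rewrite IH; ring]. Qed.

Lemma csum_shift (f : nat -> C) (L : nat) :
  csum f (S L) = (f O + csum (fun k => f (S k)) L)%C.
Proof.
  induction L as [|L IH]; simpl; [ring |].
  simpl in IH. rewrite IH. ring.
Qed.

Lemma csum_trunc (f : nat -> C) (M L : nat) :
  (M <= L)%nat -> (forall k, (M <= k)%nat -> f k = 0%C) -> csum f L = csum f M.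
Proof.
  intros HML Hf; induction L as [|L IH].
  - replace M with O by lia. reflexivity.
  - destruct (Nat.eq_dec M (S L)) as [-> | HM]; [reflexivity |].
    simpl. rewrite IH, (Hf L) by lia. ring.
Qed.

Lemma csum_even_odd (f : nat -> C) (n : nat) :
  csum f (2 * n) =
  (csum (fun j => f (2 * j)%nat) n + csum (fun j => f (2 * j + 1)%nat) n)%C.
Proof.
  induction n as [|n IH]; [simpl; ring |].
  replace (2 * S n)%nat with (S (S (2 * n))) by lia.
  cbn [csum]. rewrite IH.
  replace (2 * n + 1)%nat with (S (2 * n)) by lia. ring.
Qed.

Fixpoint binom (m k : nat) : nat :=
  match m, k with
  | _, O => 1%nat
  | O, S _ => 0%nat
  | S m', S k' => (binom m' k' + binom m' (S k'))%nat
  end.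

Lemma binom_0_r (m : nat) : binom m 0 = 1%nat.
Proof. destruct m; reflexivity. Qed.

Lemma binom_pos (m k : nat) : (k <= m)%nat -> (0 < binom m k)%nat.
Proof.
  revert k; induction m as [|m IH]; intros [|k] Hk; simpl; try lia.
  specialize (IH k). lia.
Qed.

Lemma csum_binom (m L : nat) (w : C) : (m < L)%nat ->
  csum (fun k => INR (binom m k) * w ^ k)%C L = ((1 + w) ^ m)%C.
Proof.
  revert L; induction m as [|m IH]; intros L HmL.
  - rewrite (csum_trunc _ 1); [simpl; ring | lia |].
    intros [|k] Hk; [lia | simpl; ring].
  - destruct L as [|L]; [lia |].
    set (t := fun k => (INR (binom m k) * w ^ k)%C).
    assert (Hpascal : forall k,
      (INR (binom (S m) (S k)) * w ^ S k)%C = (w * t k + t (S k))%C).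
    { intros k. unfold t. simpl binom. rewrite plus_INR, RtoC_plus. simpl. ring. }
    assert (Hhead : csum (fun k => t (S k)) L = ((1 + w) ^ m - 1)%C).
    { rewrite <- (IH (S L)) by lia. fold t. rewrite csum_shift.
      unfold t at 2. rewrite binom_0_r. simpl. ring. }
    rewrite csum_shift, (csum_ext _ _ _ (fun k _ => Hpascal k)), csum_add,
      csum_mul_l, Hhead.
    unfold t. rewrite (IH L) by lia.
    rewrite binom_0_r. simpl. ring.
Qed.

Lemma Cpow_opp (u : C) (k : nat) : ((- u) ^ k = RtoC ((-1) ^ k) * u ^ k)%C.
Proof.
  induction k as [|k IH]; simpl; [ring |].
  rewrite IH, RtoC_mult. ring.
Qed.

Lemma cexpi_add (a b : R) : cexpi (a + b) = (cexpi a * cexpi b)%C.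
Proof.
  unfold cexpi. apply injective_projections; simpl;
    [rewrite cos_plus | rewrite sin_plus]; ring.
Qed.

Lemma cexpi_0 : cexpi 0 = 1%C.
Proof. unfold cexpi. rewrite cos_0, sin_0. reflexivity. Qed.

Lemma cexpi_mul_nat (k : nat) (t : R) : cexpi (INR k * t) = (cexpi t ^ k)%C.
Proof.
  induction k as [|k IH].
  - simpl. rewrite Rmult_0_l. apply cexpi_0.
  - rewrite S_INR, Rmult_plus_distr_r, Rmult_1_l, Rplus_comm, cexpi_add, IH.
    reflexivity.
Qed.

Lemma Cmod_cexpi (t : R) : Cmod (cexpi t) = 1.
Proof.
  unfold Cmod, cexpi; simpl.
  replace (cos t * (cos t * 1) + sin t * (sin t * 1))
    with ((sin t)² + (cos t)²) by (unfold Rsqr; ring).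
  rewrite sin2_cos2. apply sqrt_1.
Qed.

Lemma Rabs_sin_le (x : R) : Rabs (sin x) <= Rabs x.
Proof.
  assert (Hpos : forall x, 0 <= x -> Rabs (sin x) <= x).
  { intros t Ht. pose proof (SIN_bound t) as Hb.
    destruct (Req_dec t 0) as [-> | Ht0].
    { rewrite sin_0, Rabs_R0. lra. }
    pose proof (sin_lt_x t ltac:(lra)).
    destruct (Rle_lt_dec 1 t).
    - apply Rabs_le. lra.
    - assert (0 <= sin t) by (apply sin_ge_0; pose proof PI2_3_2; lra).
      rewrite Rabs_pos_eq; lra. }
  destruct (Rle_dec 0 x).
  - rewrite (Rabs_pos_eq x) by lra. apply Hpos; lra.
  - rewrite <- (Ropp_involutive x), sin_neg, !Rabs_Ropp, (Rabs_left x) by lra.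
    apply Hpos; lra.
Qed.

(* |1 - e^{it}|^2 = 2 - 2 cos t = 4 sin^2 (t/2). *)
Lemma Cmod_1_sub_cexpi (t : R) : Cmod (1 - cexpi t)%C <= Rabs t.
Proof.
  unfold Cmod, cexpi; simpl.
  rewrite <- sqrt_Rsqr_abs. apply sqrt_le_1_alt.
  pose proof (cos_2a_sin (t / 2)) as Hcos.
  replace (2 * (t / 2)) with t in Hcos by field.
  pose proof (sin2_cos2 t) as Hpyth.
  assert (Hhalf : (sin (t / 2))² <= (t / 2)²).
  { rewrite (Rsqr_abs (sin _)), (Rsqr_abs (t / 2)).
    apply Rsqr_incr_1; [apply Rabs_sin_le | apply Rabs_pos | apply Rabs_pos]. }
  unfold Rsqr in *. rewrite Hcos in *. nra.
Qed.

Lemma fourier_alternating_binom (N L : nat) (x0 h w : R) : (N < L)%nat ->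
  csum (fun k => RtoC ((-1) ^ k * INR (binom N k)) * cexpi ((x0 + INR k * h) * w))%C L
  = (cexpi (x0 * w) * (1 - cexpi (h * w)) ^ N)%C.
Proof.
  intros HNL.
  replace (1 - cexpi (h * w))%C with (1 + - cexpi (h * w))%C by ring.
  rewrite <- (csum_binom N L) by exact HNL.
  rewrite <- csum_mul_l. apply csum_ext. intros k _.
  replace ((x0 + INR k * h) * w) with (x0 * w + INR k * (h * w)) by ring.
  rewrite cexpi_add, cexpi_mul_nat, Cpow_opp, RtoC_mult. ring.
Qed.

Section BinomialPair.

Variables (n : nat) (c x0 h : R) (y yhat : nat -> R).
Hypothesis Hn : (0 < n)%nat.
Hypothesis Hy : forall j, y j = x0 + 2 * INR j * h.
Hypothesis Hyhat : forall j, yhat j = x0 + (2 * INR j + 1) * h.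

Let a j := c * INR (binom (2 * n - 1) (2 * j)).
Let ahat j := c * INR (binom (2 * n - 1) (2 * j + 1)).

Lemma fourier_binom_pair_sub (w : R) :
  (fourier_discrete n ahat yhat w - fourier_discrete n a y w)%C
  = (- (c * cexpi (x0 * w) * (1 - cexpi (h * w)) ^ (2 * n - 1)))%C.
Proof.
  set (g := fun k => (RtoC ((-1) ^ k * INR (binom (2 * n - 1) k))
                      * cexpi ((x0 + INR k * h) * w))%C).
  assert (HINR_double : forall j, INR (2 * j) = 2 * INR j)
    by (intros; rewrite mult_INR; reflexivity).
  assert (Heven : fourier_discrete n a y w = (c * csum (fun j => g (2 * j)%nat) n)%C).
  { rewrite <- csum_mul_l. apply csum_ext. intros j _. unfold g, a.
    rewrite pow_1_even, Rmult_1_l, HINR_double, Hy, RtoC_mult. ring. }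
  assert (Hodd : fourier_discrete n ahat yhat w
                 = (- c * csum (fun j => g (2 * j + 1)%nat) n)%C).
  { rewrite <- csum_mul_l. apply csum_ext. intros j _. unfold g, ahat.
    rewrite Nat.add_1_r, pow_1_odd, S_INR, HINR_double, Hyhat.
    replace (-1 * INR (binom (2 * n - 1) (S (2 * j))))
      with (- INR (binom (2 * n - 1) (S (2 * j)))) by ring.
    rewrite RtoC_mult, RtoC_opp. ring. }
  rewrite Heven, Hodd, <- Cmult_assoc, <- (fourier_alternating_binom _ (2 * n)) by lia.
  fold g. rewrite csum_even_odd. ring.
Qed.

Lemma Cmod_fourier_binom_pair_sub_le (w : R) : 0 <= c ->
  Cmod (fourier_discrete n ahat yhat w - fourier_discrete n a y w)%C
  <= c * Rabs (h * w) ^ (2 * n - 1).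
Proof.
  intros Hc.
  rewrite fourier_binom_pair_sub, Cmod_opp, !Cmod_mult, Cmod_R, Cmod_cexpi, Cmod_pow,
    Rabs_pos_eq, Rmult_1_r by exact Hc.
  apply Rmult_le_compat_l; [exact Hc |].
  apply pow_incr. split; [apply Cmod_ge_0 | apply Cmod_1_sub_cexpi].
Qed.

End BinomialPair.

Lemma Rpower_inv_pow (x : R) (N : nat) :
  0 < x -> N <> 0%nat -> Rpower x (1 / INR N) ^ N = x.
Proof.
  intros Hx HN.
  rewrite <- Rpower_pow by (unfold Rpower; apply exp_pos).
  rewrite Rpower_mult.
  replace (1 / INR N * INR N) with 1 by (field; apply not_0_INR; exact HN).
  apply Rpower_1, Hx.
Qed.

Lemma resolution_pow_lt (Omega r w : R) (N : nat) :
  0 < Omega -> 0 < r -> N <> 0%nat -> Rabs w <= Omega ->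
  Rabs (exp (-1) / Omega * Rpower r (1 / INR N) * w) ^ N < r.
Proof.
  intros HOmega Hr HN Hw.
  set (tau := exp (-1) / Omega * Rpower r (1 / INR N)).
  assert (Htau : 0 < tau).
  { unfold tau, Rpower. pose proof (exp_pos (-1)).
    apply Rmult_lt_0_compat; [apply Rdiv_lt_0_compat; lra | apply exp_pos]. }
  assert (Hscale : (tau * Omega) ^ N = exp (-1) ^ N * r).
  { replace (tau * Omega) with (exp (-1) * Rpower r (1 / INR N))
      by (unfold tau; field; lra).
    rewrite Rpow_mult_distr, Rpower_inv_pow by assumption. reflexivity. }
  assert (Hexp : exp (-1) ^ N < 1).
  { apply pow_lt_1_compat; [| lia].
    split; [apply Rlt_le, exp_pos | rewrite <- exp_0; apply exp_increasing; lra]. }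
  assert (Hpow : Rabs (tau * w) ^ N <= (tau * Omega) ^ N).
  { apply pow_incr. split; [apply Rabs_pos |].
    rewrite Rabs_mult, (Rabs_pos_eq tau) by lra.
    apply Rmult_le_compat_l; lra. }
  nra.
Qed.

Theorem theorem2p4 (Omega sigma m_min : R) (n : nat)
  (HOmega : 0 < Omega) (Hsigma : 0 < sigma) (Hsm : sigma <= m_min)
  (Hn : (2 <= n)%nat) :
  let tau := exp (-1) / Omega * Rpower (sigma / m_min) (1 / (2 * INR n - 1)) in
  let y := fun j : nat => - (INR n - 1/2) * tau + 2 * INR j * tau in
  let yhat := fun j : nat => - (INR n - 3/2) * tau + 2 * INR j * tau in
  exists a ahat : nat -> R,
    (forall j, (j < n)%nat -> 0 < a j) /\
    (forall j, (j < n)%nat -> 0 < ahat j) /\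
    (forall w, -Omega <= w <= Omega ->
       Cmod (fourier_discrete n ahat yhat w - fourier_discrete n a y w)%C < sigma) /\
    ((forall j, (j < n)%nat -> m_min <= Rabs (a j)) /\
     (exists j, (j < n)%nat /\ Rabs (a j) = m_min)).
Proof.
  intros tau y yhat.
  set (N := (2 * n - 1)%nat).
  assert (Hm : 0 < m_min) by lra.
  assert (Htau : tau = exp (-1) / Omega * Rpower (sigma / m_min) (1 / INR N)).
  { unfold tau, N. rewrite minus_INR, mult_INR by lia. reflexivity. }
  assert (Hweight : forall k, (k <= N)%nat -> m_min <= m_min * INR (binom N k)).
  { intros k Hk. pose proof (le_INR 1 _ (binom_pos N k Hk)). simpl in *. nra. }
  exists (fun j => m_min * INR (binom N (2 * j))),
         (fun j => m_min * INR (binom N (2 * j + 1))).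
  split; [| split; [| split; [| split]]].
  - intros j Hj. pose proof (Hweight (2 * j)%nat ltac:(unfold N; lia)). lra.
  - intros j Hj. pose proof (Hweight (2 * j + 1)%nat ltac:(unfold N; lia)). lra.
  - intros w Hw.
    eapply Rle_lt_trans.
    { apply (Cmod_fourier_binom_pair_sub_le n m_min (- (INR n - 1/2) * tau) tau);
        [lia | intros j; unfold y; ring | intros j; unfold yhat; field | lra]. }
    pose proof (resolution_pow_lt Omega (sigma / m_min) w N) as Hpow.
    rewrite <- Htau in Hpow.
    replace sigma with (m_min * (sigma / m_min)) by (field; lra).
    apply Rmult_lt_compat_l;
      [lra | apply Hpow; [lra | apply Rdiv_lt_0_compat; lra | unfold N; lia | apply Rabs_le; lra]].
  - intros j Hj. pose proof (Hweight (2 * j)%nat ltac:(unfold N; lia)).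
    rewrite Rabs_pos_eq; lra.
  - exists 0%nat. split; [lia |].
    rewrite Nat.mul_0_r, binom_0_r, Rmult_1_r. apply Rabs_pos_eq; lra.
Qed.
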